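(* Let $l_2$ be an even positive integer and $l_3$ an odd integer with $l_3>1$, and let $G=\Theta(1,l_2,l_3)$. Then $G$ is enumeratively chromatic-choosable.
   Context: For positive integers $l_1,l_2,l_3$, the theta graph $\Theta(l_1,l_2,l_3)$ consists of two end vertices joined by three internally disjoint paths of lengths (numbers of edges) $l_1,l_2,l_3$. An $m$-assignment $L$ for a graph $G$ assigns to each vertex $v$ a set $L(v)$ of $m$ colors; $P(G,L)$ is the number of proper colorings $f$ of $G$ with $f(v)\in L(v)$ for all $v$. $P(G,m)$ is the chromatic polynomial, and the list color function $P_\ell(G,m)$ is the minimum of $P(G,L)$ over all $m$-assignments $L$. $G$ is enumeratively chromatic-choosable if $P_\ell(G,m)=P(G,m)$ for all $m\in\mathbb{N}$. *)

From mathcomp Require Import all_boot.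
Set Implicit Arguments. Unset Strict Implicit. Unset Printing Implicit Defensive.

Definition proper_col (T : finType) (e : rel T) (c : T -> nat) : bool :=
  [forall x, forall y, e x y ==> (c x != c y)].

Definition m_assignment (T : finType) (m : nat) (L : T -> seq nat) : Prop :=
  forall v, size (L v) = m /\ uniq (L v).

(* P(G,L) for an m-assignment L: number of proper colourings f with f v \in L v.
   Such a colouring is encoded by the choice of an index in 'I_m into each list
   L v; since the lists are duplicate-free this is a bijection. *)
Definition P_list (T : finType) (e : rel T) (m : nat) (L : T -> seq nat) : nat :=
  #|[set f : {ffun T -> 'I_m} | proper_col e (fun v => nth 0 (L v) (f v))]|.

Definition chrom_poly (T : finType) (e : rel T) (m : nat) : nat :=
  #|[set f : {ffun T -> 'I_m} | proper_col e (fun v => nat_of_ord (f v))]|.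

Definition is_list_color_fun (T : finType) (e : rel T) (m k : nat) : Prop :=
  (exists L, m_assignment m L /\ P_list e m L = k) /\
  (forall L, m_assignment m L -> k <= P_list e m L).

Definition enum_chromatic_choosable (T : finType) (e : rel T) : Prop :=
  forall m : nat, is_list_color_fun e m (chrom_poly e m).

(* Theta graph Theta(l1,l2,l3) on vertex set 'I_(l1+l2+l3-1):
   vertex 0 and 1 are the two end vertices; the internal vertices of path j
   (of length l_j) are numbered consecutively after those of earlier paths. *)
Definition theta_pv (o l k : nat) : nat :=
  if k == 0 then 0 else if k == l then 1 else o + k + 1.

Definition path_adj (o l x y : nat) : bool :=
  has (fun k => ((x == theta_pv o l k) && (y == theta_pv o l k.+1)) ||
                ((y == theta_pv o l k) && (x == theta_pv o l k.+1))) (iota 0 l).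

Definition theta_adj (l1 l2 l3 : nat) (x y : nat) : bool :=
  [|| path_adj 0 l1 x y, path_adj (l1.-1) l2 x y | path_adj (l1.-1 + l2.-1) l3 x y].

Definition theta_graph (l1 l2 l3 : nat) : rel 'I_(l1 + l2 + l3 - 1) :=
  fun x y => theta_adj l1 l2 l3 x y.
Arguments theta_graph : clear implicits.

From mathcomp Require Import all_boot zify.
Set Implicit Arguments. Unset Strict Implicit. Unset Printing Implicit Defensive.

(* Fix the colours a != b of the two end vertices of G = Θ(1, l2, l3): the rest of a
   list colouring is an independent colouring of the internal vertices of the paths X and
   Y of lengths l2 and l3, so P(G, L) = Σ_{a != b} N_X(a, b) N_Y(a, b).  As l2 is even, X
   has an odd number of internal vertices, and then N_X(a, b) is at least its value for
   identical lists (induction removing two vertices at a time).  What is left,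
   Σ_{a != b} N_Y(a, b), counts list colourings of the even cycle formed by Y and the edge
   ab, which has length at least 4.  Either consecutive lists of this cycle all agree up
   to order, and the count is the chromatic polynomial, or after a rotation some colour a0
   of the first list is missing from the second; then the colourings giving a0 to the
   first vertex alone number at least (m-1)^(n-1) for a cycle of length n, and with the
   bound for odd paths on the other m-1 colours this is at least the chromatic
   polynomial of the cycle.  Identical lists attain both bounds. *)

Lemma sum_nat_const_seq (I : Type) (r : seq I) (P : pred I) (c : nat) :
  \sum_(i <- r | P i) c = count P r * c.
Proof. by rewrite big_const_seq iter_addn_0 mulnC. Qed.

Lemma sum_nat_boolM (I : Type) (r : seq I) (P : pred I) (c : nat) :
  \sum_(i <- r) P i * c = count P r * c.
Proof.
rewrite -sum_nat_const_seq [RHS]big_mkcond; apply: eq_bigr => i _.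
by case: (P i); rewrite ?mul1n.
Qed.

Lemma count_predC1_uniq (T : eqType) (s : seq T) (x : T) :
  uniq s -> count (predC1 x) s = size s - (x \in s).
Proof. by move=> us; rewrite -(count_predC (pred1 x)) count_uniq_mem // addKn. Qed.

Lemma count_andl (T : Type) (c : bool) (P : pred T) (s : seq T) :
  count (fun t => c && P t) s = c * count P s.
Proof. by case: c; rewrite ?mul1n ?mul0n //= count_pred0. Qed.

Lemma sum_mem_le (I : eqType) (s t : seq I) (F : I -> nat) :
  uniq s -> uniq t -> \sum_(x <- s | x \in t) F x <= \sum_(x <- t) F x.
Proof.
move=> us ut.
apply: (uniq_sub_le_big_cond leqnn (fun x y => leq_addr y x)); rewrite ?filter_uniq //.
by move=> x; rewrite !mem_filter => /andP[].
Qed.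

Lemma not_perm_exists_notin (T : eqType) (s t : seq T) :
  uniq s -> uniq t -> size t = size s -> ~~ perm_eq s t ->
  exists2 x, x \in s & x \notin t.
Proof.
move=> us ut eq_ts not_st.
have [/allP s_sub_t|/allPn[x xs xt]] := boolP (all [in t] s); last by exists x.
have [_ eq_st] := uniq_min_size us s_sub_t (eq_leq eq_ts).
by rewrite (uniq_perm us ut eq_st) in not_st.
Qed.

Lemma nth_rot (T : Type) (x0 : T) (s : seq T) i j :
  i + j < size s -> nth x0 (rot i s) j = nth x0 s (i + j).
Proof. by move=> lt_ij; rewrite /rot nth_cat size_drop ltn_subRL lt_ij nth_drop. Qed.

Lemma split_cons2_cat (T : Type) (s : seq T) n1 n2 : size s = (n1 + n2).+2 ->
  exists x y s1 s2, [/\ s = [:: x, y & s1 ++ s2], size s1 = n1 & size s2 = n2].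
Proof.
case: s => [|x [|y s]] //= [ss]; exists x, y, (take n1 s), (drop n1 s).
by rewrite cat_take_drop size_drop size_takel ss ?addKn ?leq_addr.
Qed.

(** * Cartesian products of lists *)

Fixpoint cart (T : Type) (Ls : seq (seq T)) : seq (seq T) :=
  if Ls is L :: Ls' then [seq x :: t | x <- L, t <- cart Ls'] else [:: [::]].

Section Cartesian.

Variable T : eqType.
Implicit Types (L : seq T) (Ls : seq (seq T)) (P R : pred (seq T)).

Lemma count_cart_cons P L Ls :
  count P (cart (L :: Ls)) = \sum_(x <- L) count (fun t => P (x :: t)) (cart Ls).
Proof.
elim: L => [|x L IH]; first by rewrite big_nil.
by rewrite /= count_cat count_map big_cons -IH.
Qed.

Lemma count_cart_cat P R LX LY :
  count (fun t => P (take (size LX) t) && R (drop (size LX) t)) (cart (LX ++ LY)) =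
  count P (cart LX) * count R (cart LY).
Proof.
elim: LX P => [|L LX IH] P /=.
  under eq_count => t do rewrite take0 drop0.
  by case: (P [::]); rewrite /= ?mul1n ?mul0n ?count_pred0.
rewrite !count_cart_cons big_distrl; apply: eq_bigr => x _.
exact: (IH (fun u => P (x :: u))).
Qed.

Lemma mem_cart s Ls : (s \in cart Ls) = all2 (fun x L => x \in L) s Ls.
Proof.
elim: Ls s => [|L Ls IH] [|x s] //=; rewrite ?inE //.
  by apply/allpairsP => -[[y t] [_ _ /=]].
apply/allpairsP/andP => [[[y t] [yL tLs [-> ->]]]|[xL sLs]].
  by rewrite -IH.
by exists (x, s); rewrite /= IH.
Qed.

Lemma size_cart Ls : size (cart Ls) = \prod_(L <- Ls) size L.
Proof. by elim: Ls => [|L Ls IH]; rewrite ?big_nil ?big_cons //= size_allpairs IH. Qed.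

Lemma cart_uniq Ls : all uniq Ls -> uniq (cart Ls).
Proof.
elim: Ls => [|L Ls IH] //= /andP[uL uLs].
by apply: allpairs_uniq => //; [exact: IH | move=> [x t] [y u] _ _ /= [-> ->]].
Qed.

End Cartesian.

Lemma card_ffun_cart (I : finType) m (L : I -> seq nat) (Q : pred (seq nat)) :
  m_assignment m L ->
  #|[set f : {ffun I -> 'I_m} | Q [seq nth 0 (L i) (f i) | i <- enum I]]| =
  count Q (cart [seq L i | i <- enum I]).
Proof.
move=> mL; set phi := fun f : {ffun I -> 'I_m} => [seq nth 0 (L i) (f i) | i <- enum I].
(* phi is injective and both lists have #|'I_m| ^ #|I| elements. *)
have -> : #|[set f | Q (phi f)]| = count (preim phi Q) (enum {ffun I -> 'I_m}).
  by rewrite enumT cardE /enum_mem size_filter; apply: eq_count => f; exact: in_set.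
rewrite -count_map; apply/permP.
have uphi : uniq (map phi (enum {ffun I -> 'I_m})).
  rewrite map_inj_uniq ?enum_uniq // => f g /eq_in_map eq_fg; apply/ffunP => i.
  have [sLi uLi] := mL i; apply: val_inj; apply/eqP.
  by rewrite -(nth_uniq 0 _ _ uLi) ?sLi ?ltn_ord // eq_fg ?mem_enum.
have ucart : uniq (cart [seq L i | i <- enum I]).
  by apply: cart_uniq; apply/allP => _ /mapP[i _ ->]; case: (mL i).
apply: uniq_perm => //; apply: (uniq_min_size uphi _ _).2 => [_ /mapP[f _ ->]|].
  rewrite mem_cart /phi; elim: (enum I) => //= i s ->; rewrite andbT.
  by apply: mem_nth; case: (mL i) => ->.
rewrite size_cart size_map -cardE card_ffun card_ord big_map big_enum /=.
by rewrite (eq_bigr (fun=> m)) ?prod_nat_const // => i _; case: (mL i).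
Qed.

(** * List colourings of paths *)

Definition mlist (m : nat) (L : seq nat) : bool := uniq L && (size L == m).

(* [ncol_path a Ls b] counts the colourings of the internal vertices of a path, with
   lists [Ls], whose end vertices have colours [a] and [b]; in [ncol_fpath L Ls b] the
   first end vertex is coloured from [L] as well. *)
Fixpoint ncol_path (a : nat) (Ls : seq (seq nat)) (b : nat) : nat :=
  if Ls is L :: Ls' then \sum_(x <- L | x != a) ncol_path x Ls' b else a != b.

Definition ncol_fpath (L : seq nat) (Ls : seq (seq nat)) (b : nat) : nat :=
  \sum_(x <- L) ncol_path x Ls b.

Lemma ncol_path_cons_mem a L Ls b : uniq L ->
  ncol_path a (L :: Ls) b + (a \in L) * ncol_path a Ls b = ncol_fpath L Ls b.
Proof.
move=> uL; rewrite /ncol_fpath; have [aL|aL] := boolP (a \in L).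
  by rewrite (bigD1_seq a aL uL) mul1n addnC.
by rewrite mul0n addn0 /= -big_filter (all_filterP _) // all_predC has_pred1.
Qed.

Lemma ncol_fpath_cons L L' Ls b : uniq L' ->
  ncol_fpath L (L' :: Ls) b + \sum_(x <- L | x \in L') ncol_path x Ls b =
  size L * ncol_fpath L' Ls b.
Proof.
move=> uL'; rewrite -count_predT -sum_nat_const_seq.
rewrite big_mkcond -big_split /=; apply: eq_bigr => x _.
by rewrite -(ncol_path_cons_mem x Ls b uL'); case: (x \in L'); rewrite ?mul1n ?mul0n.
Qed.

Lemma ncol_path_le_fpath z L Ls b :
  uniq L -> z \in L -> ncol_path z Ls b <= ncol_fpath L Ls b.
Proof. by move=> uL zL; rewrite /ncol_fpath (bigD1_seq z zL uL) leq_addr. Qed.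

Lemma ncol_fpath_ge_pow m L Ls b :
  all (mlist m) (L :: Ls) -> (m - 1) ^ (size Ls).+1 <= ncol_fpath L Ls b.
Proof.
elim: Ls L => [|L' Ls IH] L /=.
  rewrite andbT expn1 => /andP[uL /eqP <-].
  have -> : ncol_fpath L [::] b = count (predC1 b) L.
    by rewrite /ncol_fpath -sum1_count [RHS]big_mkcond; apply: eq_bigr => x _; case: (x != b).
  by rewrite count_predC1_uniq // leq_sub2l // leq_b1.
move=> /and3P[mL mL' mLs]; move: (mL) (mL') => /andP[uL /eqP sL] /andP[uL' _].
rewrite expnS; apply: leq_trans (leq_mul (leqnn (m - 1)) (IH L' _)) _; first exact/andP.
rewrite mulnBl mul1n -sL -(ncol_fpath_cons L Ls b uL') leq_subLR addnC leq_add2r.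
exact: sum_mem_le.
Qed.

Lemma ncol_path_count a Ls b :
  count (fun X => path (fun x y => x != y) a (rcons X b)) (cart Ls) = ncol_path a Ls b.
Proof.
elim: Ls a => [|L Ls IH] a /=; first by rewrite andbT addn0.
rewrite count_cart_cons [RHS]big_mkcond /=; apply: eq_bigr => x _.
by rewrite count_andl IH eq_sym; case: (x != a); rewrite ?mul1n.
Qed.

(* [ucol_ne m k] and [ucol_eq m k] count the colourings from [m] colours of the [k]
   internal vertices of a path whose end vertices have fixed distinct, resp. equal,
   colours. *)
Fixpoint ucol (m k : nat) : nat * nat :=
  if k is k'.+1 then ((ucol m k').2 + (m - 2) * (ucol m k').1, (m - 1) * (ucol m k').1)
  else (1, 0).

Definition ucol_ne m k := (ucol m k).1.

Definition ucol_eq m k := (ucol m k).2.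

Lemma ucol_neS m k : ucol_ne m k.+1 = ucol_eq m k + (m - 2) * ucol_ne m k.
Proof. by []. Qed.

Lemma ucol_eqS m k : ucol_eq m k.+1 = (m - 1) * ucol_ne m k.
Proof. by []. Qed.

Lemma ucol_parity m k : 2 <= m ->
  if odd k then ucol_eq m k = (ucol_ne m k).+1 /\ m * ucol_ne m k + 1 = (m - 1) ^ k.+1
  else ucol_ne m k = (ucol_eq m k).+1 /\ m * ucol_ne m k = (m - 1) ^ k.+1 + 1.
Proof.
move=> m2; elim: k => [|k IH]; first by rewrite expn1 /ucol_ne /ucol_eq /=; lia.
rewrite ucol_neS ucol_eqS expnS /=; case: (odd k) IH => /= -[-> pow_k].
  by split; [nia | rewrite -pow_k; nia].
by split; nia.
Qed.

Lemma ucol_odd m k : 2 <= m -> odd k ->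
  ucol_eq m k = (ucol_ne m k).+1 /\ m * ucol_ne m k + 1 = (m - 1) ^ k.+1.
Proof. by move=> m2 ok; have := ucol_parity k m2; rewrite ok. Qed.

Lemma ucol_ne_odd_small m k : m <= 2 -> odd k -> ucol_ne m k = 0.
Proof.
move=> m2; suff : if odd k then ucol_ne m k = 0 else ucol_eq m k = 0.
  by move=> + ok; rewrite ok.
have m20 : m - 2 = 0 by lia.
elim: k => [|k IH] //; rewrite ucol_neS ucol_eqS m20 /=.
by case: (odd k) IH => /= ->; rewrite ?muln0.
Qed.

Lemma ucol_neSS m k : 2 <= m -> odd k ->
  ucol_ne m k.+2 = (m - 2) * (m - 1) ^ k.+1 + ucol_ne m k.
Proof.
move=> m2 ok; have [eq_k pow_k] := ucol_odd m2 ok.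
by rewrite ucol_neS ucol_eqS ucol_neS eq_k -pow_k; nia.
Qed.

Lemma ucol_eq_le m k : 3 <= m -> odd k -> 3 <= k ->
  m * ucol_eq m k <= (m - 1) ^ k + (m - 1) * ucol_ne m k.
Proof.
move=> m3 ok k3; have [-> pow_k] := ucol_odd (ltnW m3) ok.
have pow3 : (m - 1) ^ 3 <= (m - 1) ^ k by rewrite leq_pexp2l //; lia.
move: pow_k pow3; rewrite expnS !expnS expn0 muln1.
set q := (m - 1) ^ k; nia.
Qed.

Lemma ncol_path_cons2_ge m a L L' Ls b U : 2 <= m -> mlist m L -> mlist m L' ->
  (forall c, U <= ncol_path c Ls b) ->
  (m - 2) * ncol_fpath L' Ls b + U <= ncol_path a [:: L, L' & Ls] b.
Proof.
move=> m2 /andP[uL /eqP sL] /andP[uL' /eqP sL'] U_le.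
have split_L := ncol_path_cons_mem a (L' :: Ls) b uL.
have split_L' := ncol_path_cons_mem a Ls b uL'.
have S_eq := ncol_fpath_cons L Ls b uL'; rewrite sL in S_eq.
have I_le := sum_mem_le (fun x => ncol_path x Ls b) uL uL'.
have U_le_S' : U <= ncol_fpath L' Ls b.
  have zL' : nth 0 L' 0 \in L' by rewrite mem_nth // sL'; lia.
  exact: leq_trans (U_le _) (ncol_path_le_fpath _ _ uL' zL').
move: split_L split_L' S_eq I_le U_le_S'; rewrite /ncol_fpath /=.
set N1 := \sum_(x <- L | x != a) _; set N2 := \sum_(x <- L' | x != a) _.
set S := \sum_(x <- L) _; set S' := \sum_(x <- L') _.
set I := \sum_(x <- L | x \in L') _.
have mS' : m * S' = (m - 2) * S' + 2 * S' by rewrite -mulnDl subnK.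
have := U_le a.
have [aL'|aL'] := boolP (a \in L'); case aL: (a \in L) => /=; try lia.
have [z zL' zL] : exists2 z, z \in L' & z \notin L.
  apply: not_perm_exists_notin => //; first by rewrite sL sL'.
  by apply/negP => /perm_mem/(_ a); rewrite aL (negbTE aL').
have := sum_mem_le (fun x => ncol_path x Ls b) (s := z :: L) (t := L').
rewrite big_cons zL' /= zL uL => /(_ isT uL').
rewrite -/S' -/I; have := U_le z; lia.
Qed.

Lemma ncol_path_ge_ucol m a Ls b : odd (size Ls) -> all (mlist m) Ls ->
  ucol_ne m (size Ls) <= ncol_path a Ls b.
Proof.
have [m2 ok _|m3] := leqP m 2; first by rewrite ucol_ne_odd_small.
move=> ok; have [n sLs] : exists n, size Ls = n.*2.+1.
  by exists (size Ls)./2; rewrite -[LHS]odd_double_half ok.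
rewrite sLs; elim: n Ls a {ok} sLs => [|n IH] [|L [|L' Ls]] a //=.
- move=> _ /andP[mL _]; move: (mL) => /andP[uL _].
  have := @ncol_fpath_ge_pow m L [::] b; rewrite /= mL => /(_ isT).
  rewrite -(ncol_path_cons_mem a [::] b uL) /= expn1 ucol_neS /ucol_ne /ucol_eq /= muln1.
  by case: (a \in L) (a != b) => [] [] /=; lia.
- rewrite doubleS => -[sLs] /and3P[mL mL' mLs].
  rewrite ucol_neSS ?(ltnW m3) //=; last by rewrite odd_double.
  apply: leq_trans _ (ncol_path_cons2_ge a (ltnW m3) mL mL' (fun c => IH Ls c sLs mLs)).
  rewrite leq_add2r leq_mul2l -sLs; apply/orP; right.
  by apply: ncol_fpath_ge_pow; rewrite /= mL' mLs.
Qed.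

Lemma ncol_path_rcons a Ls L c :
  ncol_path a (rcons Ls L) c = \sum_(x <- L | x != c) ncol_path a Ls x.
Proof.
elim: Ls a => [|L' Ls IH] a /=.
  rewrite [RHS]big_mkcond [LHS]big_mkcond; apply: eq_bigr => x _ /=.
  by rewrite (eq_sym a x); case: (x != a); case: (x != c).
under eq_bigr do rewrite IH.
exact: exchange_big.
Qed.

Lemma ncol_path_unif m C k a b : mlist m C -> a \in C -> b \in C ->
  ncol_path a (nseq k C) b = if a == b then ucol_eq m k else ucol_ne m k.
Proof.
move=> /andP[uC /eqP sC]; elim: k a => [|k IH] a aC bC.
  by rewrite /ucol_eq /ucol_ne /=; case: (a == b).
rewrite /= big_seq_cond.
under eq_bigr => x /andP[xC _] do rewrite IH //.
rewrite -big_seq_cond -big_filter.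
have uCa : uniq [seq x <- C | x != a] by rewrite filter_uniq.
have sCa : size [seq x <- C | x != a] = m - 1.
  by rewrite size_filter count_predC1_uniq // aC sC.
case: eqP => [<-|/eqP ne_ab].
  rewrite (eq_big_seq (fun=> ucol_ne m k)); last first.
    by move=> x; rewrite mem_filter => /andP[/negbTE ->].
  by rewrite sum_nat_const_seq count_predT sCa ucol_eqS mulnC.
have bCa : b \in [seq x <- C | x != a] by rewrite mem_filter eq_sym ne_ab.
rewrite (bigD1_seq b bCa uCa) eqxx /=.
under eq_bigr => x /negbTE -> do [].
by rewrite sum_nat_const_seq count_predC1_uniq // bCa sCa ucol_neS /= -subnDA.
Qed.

Lemma ncol_path_perm a Ls Ls' b :
  all2 perm_eq Ls Ls' -> ncol_path a Ls b = ncol_path a Ls' b.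
Proof.
elim: Ls Ls' a => [|L Ls IH] [|L' Ls'] a //= /andP[pL pLs].
by rewrite (perm_big _ pL); apply: eq_bigr => x _; apply: IH.
Qed.

(** * List colourings of even cycles *)

Definition ncol_cycle (Cs : seq (seq nat)) : nat :=
  if Cs is C :: Ds then \sum_(a <- C) ncol_path a Ds a else 0.

Lemma ncol_cycle_rot1 Cs : ncol_cycle (rot 1 Cs) = ncol_cycle Cs.
Proof.
case: Cs => [|C0 [|C1 Ds]] //; rewrite rot1_cons /=.
under eq_bigr do rewrite ncol_path_rcons big_mkcond.
rewrite exchange_big; apply: eq_bigr => x _; rewrite [RHS]big_mkcond.
by apply: eq_bigr => a _; rewrite eq_sym.
Qed.

Lemma ncol_cycle_rot i Cs : ncol_cycle (rot i Cs) = ncol_cycle Cs.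
Proof.
elim: i => [|i IH]; first by rewrite rot0.
have [lt_i|le_i] := ltnP i (size Cs); first by rewrite rotS // ncol_cycle_rot1 IH.
by rewrite rot_oversize // ltnW.
Qed.

Lemma ncol_cycle_unif m C Ds : mlist m C -> all (perm_eq^~ C) Ds ->
  ncol_cycle (C :: Ds) = m * ucol_eq m (size Ds).
Proof.
move=> mC pDs; have all2_nseq : all2 perm_eq Ds (nseq (size Ds) C).
  by elim: Ds pDs => //= D Ds IH /andP[-> /IH].
rewrite /= (eq_big_seq (fun=> ucol_eq m (size Ds))); last first.
  by move=> a aC; rewrite (ncol_path_perm _ _ all2_nseq) (ncol_path_unif _ mC aC aC) eqxx.
by move: mC => /andP[_ /eqP <-]; rewrite sum_nat_const_seq count_predT.
Qed.

Lemma ncol_cycle_ge_nonperm m C0 C1 Ds : 3 <= m -> odd (size Ds).+1 -> 2 <= size Ds ->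
  all (mlist m) [:: C0, C1 & Ds] -> ~~ perm_eq C0 C1 ->
  m * ucol_eq m (size Ds).+1 <= ncol_cycle [:: C0, C1 & Ds].
Proof.
move=> m3 ok sDs /and3P[mC0 mC1 mDs] nC01.
move: (mC0) (mC1) => /andP[uC0 /eqP sC0] /andP[uC1 /eqP sC1].
have [a0 a0C0 a0C1] := not_perm_exists_notin uC0 uC1 (etrans sC1 (esym sC0)) nC01.
(* As a0 is not in C1, the a0-term counts paths with a free end vertex. *)
rewrite /ncol_cycle (bigD1_seq a0 a0C0 uC0).
apply: leq_trans (ucol_eq_le m3 ok _) _; first by lia.
apply: leq_add.
  have := ncol_path_cons_mem a0 Ds a0 uC1; rewrite (negbTE a0C1) mul0n addn0 => ->.
  by apply: ncol_fpath_ge_pow; rewrite /= mC1.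
have U_le a : ucol_ne m (size Ds).+1 <= ncol_path a (C1 :: Ds) a.
  by apply: ncol_path_ge_ucol; rewrite //= mC1.
apply: (@leq_trans (\sum_(a <- C0 | a != a0) ucol_ne m (size Ds).+1)); last exact: leq_sum.
by rewrite sum_nat_const_seq count_predC1_uniq // a0C0 sC0 mulnC.
Qed.

Lemma ncol_cycle_ge m k Cs : 3 <= m -> odd k -> 3 <= k -> size Cs = k.+1 ->
  all (mlist m) Cs -> m * ucol_eq m k <= ncol_cycle Cs.
Proof.
move=> m3 ok k3 sCs mCs.
(* Either consecutive lists all agree up to order, or a rotation moves a consecutive
   pair that differs as sets to the front. *)
have [/forallP consec_perm|] :=
  boolP [forall i : 'I_k, perm_eq (nth [::] Cs i) (nth [::] Cs i.+1)].
  case: Cs sCs mCs consec_perm => [|C Ds] // [sDs] /andP[mC _] consec_perm.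
  rewrite (ncol_cycle_unif mC) ?sDs //.
  have perm_head j : j <= k -> perm_eq (nth [::] (C :: Ds) j) C.
    elim: j => [|j IH] lt_jk //.
    have := consec_perm (Ordinal lt_jk); rewrite perm_sym => perm_j.
    exact: perm_trans perm_j (IH (ltnW lt_jk)).
  by apply/(all_nthP [::]) => j lt_j; apply: (perm_head j.+1); rewrite -sDs.
rewrite negb_forall => /existsP[i not_perm].
have nth_rot_i j : j <= 1 -> nth [::] (rot i Cs) j = nth [::] Cs (i + j).
  by move=> j1; apply: nth_rot; rewrite sCs; have := ltn_ord i; lia.
have mrot : all (mlist m) (rot i Cs) by apply/allP => C; rewrite mem_rot => /(allP mCs).
have [C0 [C1 [Ds eCs]]] : exists C0 C1 Ds, rot i Cs = [:: C0, C1 & Ds].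
  case: (rot i Cs) (size_rot i Cs) => [|C0 [|C1 Ds]]; rewrite sCs // => -[k0].
  - by lia.
  - by exists C0, C1, Ds.
have := size_rot i Cs; rewrite eCs sCs => -[sDs].
have e0 : nth [::] Cs i = C0 by rewrite -[X in nth _ _ X]addn0 -nth_rot_i ?eCs.
have e1 : nth [::] Cs i.+1 = C1 by rewrite -addn1 -nth_rot_i ?eCs.
rewrite e0 e1 in not_perm.
rewrite -(ncol_cycle_rot i Cs) eCs in mrot *.
rewrite -sDs in ok k3 *; apply: ncol_cycle_ge_nonperm => //; lia.
Qed.

(** * The theta graph Θ(1, l2, l3) *)

(* The number of list colourings of Θ(1, size LX + 1, size LY + 1) whose end vertices
   have lists [La] and [Lb] and the internal vertices of its two long paths lists [LX]
   and [LY]. *)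
Definition ncol_theta (La Lb : seq nat) (LX LY : seq (seq nat)) : nat :=
  \sum_(a <- La) \sum_(b <- Lb) (a != b) * (ncol_path a LX b * ncol_path a LY b).

Lemma ncol_theta_ge m La Lb LX LY : odd (size LX) -> ~~ odd (size LY) -> 2 <= size LY ->
  all (mlist m) [:: La, Lb & LX ++ LY] ->
  m * (m - 1) * ucol_ne m (size LX) * ucol_ne m (size LY) <= ncol_theta La Lb LX LY.
Proof.
move=> oX eY sY; rewrite /= all_cat => /and4P[mLa mLb mLX mLY].
have [m2|m3] := leqP m 2; first by rewrite ucol_ne_odd_small ?muln0.
set U := ucol_ne m (size LX).
have cycle_eq : \sum_(a <- La) \sum_(b <- Lb) (a != b) * (U * ncol_path a LY b) =
                U * ncol_cycle (La :: rcons LY Lb).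
  rewrite /= big_distrr; apply: eq_bigr => a _.
  rewrite ncol_path_rcons big_distrr [RHS]big_mkcond; apply: eq_bigr => b _.
  by rewrite eq_sym; case: (b != a); rewrite ?mul1n ?muln0.
apply: leq_trans (_ : U * ncol_cycle (La :: rcons LY Lb) <= _); last first.
  rewrite -cycle_eq; apply: leq_sum => a _; apply: leq_sum => b _.
  by rewrite leq_mul2l leq_mul2r ncol_path_ge_ucol ?orbT.
have := @ncol_cycle_ge m (size LY).+1 (La :: rcons LY Lb) m3.
rewrite /= size_rcons all_rcons mLa mLb mLY ltnS eY => /(_ isT sY erefl isT).
rewrite ucol_eqS => cycle_ge; apply: leq_trans (leq_mul (leqnn U) cycle_ge).
by rewrite [U * _]mulnC -!mulnA [U * _]mulnC.
Qed.

Lemma ncol_theta_unif m C k1 k2 : mlist m C ->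
  ncol_theta C C (nseq k1 C) (nseq k2 C) = m * (m - 1) * ucol_ne m k1 * ucol_ne m k2.
Proof.
move=> mC; move: (mC) => /andP[uC /eqP sC].
set U12 := ucol_ne m k1 * ucol_ne m k2.
rewrite /ncol_theta (eq_big_seq (fun=> (m - 1) * U12)); last first.
  move=> a aC; rewrite (eq_big_seq (fun b => (b != a) * U12)); last first.
    by move=> b bC; rewrite !(ncol_path_unif _ mC aC bC) eq_sym; case: eqP.
  by rewrite sum_nat_boolM count_predC1_uniq // aC sC.
by rewrite sum_nat_const_seq count_predT sC !mulnA.
Qed.

Lemma proper_path_adjE N o l (c : nat -> nat) : o + l < N ->
  [forall x : 'I_N, forall y : 'I_N, path_adj o l x y ==> (c x != c y)] =
  [forall k : 'I_l, c (theta_pv o l k) != c (theta_pv o l k.+1)].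
Proof.
move=> olN; have pv_lt k : k <= l -> theta_pv o l k < N.
  by rewrite /theta_pv; case: eqP => k0; [lia | case: eqP => kl; lia].
apply/forallP/forallP => [proper k | consec x].
  have := proper (Ordinal (pv_lt k (ltnW (ltn_ord k))));
  move=> /forallP/(_ (Ordinal (pv_lt k.+1 (ltn_ord k))))/implyP.
  apply; apply/hasP; exists (nat_of_ord k); first by rewrite mem_iota leq0n add0n ltn_ord.
  by rewrite /= !eqxx.
apply/forallP => y; apply/implyP => /hasP[k]; rewrite mem_iota /= => lt_kl.
case/orP => /andP[/eqP-> /eqP->]; first exact: (consec (Ordinal lt_kl)).
by rewrite eq_sym; exact: (consec (Ordinal lt_kl)).
Qed.

Lemma nth_theta_pv a b P Z Q l k : 0 < l -> size Z = l.-1 -> k <= l ->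
  nth 0 (a :: b :: P ++ Z ++ Q) (theta_pv (size P) l k) = nth 0 (a :: rcons Z b) k.
Proof.
move=> l_gt0 sZ le_kl; rewrite /theta_pv.
case: eqP => [->|/eqP k_gt0] //; case: eqP => [->|/eqP ne_kl].
  by rewrite -[l]prednK //= nth_rcons sZ ltnn eqxx.
rewrite -[k]prednK ?lt0n // addn1 addnS /= nth_cat ltnNge leq_addr /= addKn.
have lt_kl : k.-1 < l.-1 by lia.
by rewrite nth_rcons nth_cat sZ lt_kl.
Qed.

Lemma proper_path_adj N a b P Z Q l : 0 < l -> size Z = l.-1 -> size P + l < N ->
  [forall x : 'I_N, forall y : 'I_N, path_adj (size P) l x y ==>
     (nth 0 (a :: b :: P ++ Z ++ Q) x != nth 0 (a :: b :: P ++ Z ++ Q) y)] =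
  path (fun x y => x != y) a (rcons Z b).
Proof.
move=> l_gt0 sZ lt_lN; rewrite proper_path_adjE //.
apply/forallP/(pathP 0) => [consec i | consec k].
  rewrite size_rcons sZ prednK // => lt_il.
  by have := consec (Ordinal lt_il); rewrite !nth_theta_pv // ltnW.
have le_kl : k <= l := ltnW (ltn_ord k).
rewrite !nth_theta_pv ?ltn_ord //.
by apply: consec; rewrite size_rcons sZ prednK.
Qed.

Lemma forall2_or3_implyE (T : finType) (A B C D : rel T) :
  [forall x, forall y, [|| A x y, B x y | C x y] ==> D x y] =
  [&& [forall x, forall y, A x y ==> D x y], [forall x, forall y, B x y ==> D x y]
    & [forall x, forall y, C x y ==> D x y]].
Proof.
apply/forallP/and3P => [all_xy | [/forallP hA /forallP hB /forallP hC] x].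
  by split; apply/forallP => x; apply/forallP => y; apply/implyP => hxy;
    move: (forallP (all_xy x) y); rewrite hxy ?orbT.
apply/forallP => y; apply/implyP => /or3P[hxy|hxy|hxy].
- by move: (forallP (hA x) y); rewrite hxy.
- by move: (forallP (hB x) y); rewrite hxy.
- by move: (forallP (hC x) y); rewrite hxy.
Qed.

Lemma proper_theta l1 l2 l3 a b W X Y : 0 < l1 -> 0 < l2 -> 0 < l3 ->
  size W = l1.-1 -> size X = l2.-1 -> size Y = l3.-1 ->
  proper_col (theta_graph l1 l2 l3) (fun v => nth 0 (a :: b :: W ++ X ++ Y) v) =
  [&& path (fun x y => x != y) a (rcons W b), path (fun x y => x != y) a (rcons X b)
    & path (fun x y => x != y) a (rcons Y b)].
Proof.
move=> l1_gt0 l2_gt0 l3_gt0 sW sX sY.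
rewrite /proper_col /theta_graph /theta_adj forall2_or3_implyE.
congr [&& _, _ & _].
- by rewrite (proper_path_adj a b (P := [::])) //=; lia.
- by rewrite -sW proper_path_adj //; lia.
- have := proper_path_adj (N := l1 + l2 + l3 - 1) a b (P := W ++ X) [::] l3_gt0 sY.
  by rewrite -catA cats0 size_cat sW sX => ->; lia.
Qed.

Lemma count_proper_theta1 l2 l3 La Lb LX LY : 0 < l2 -> 0 < l3 ->
  size LX = l2.-1 -> size LY = l3.-1 ->
  count (fun s => proper_col (theta_graph 1 l2 l3) (fun v => nth 0 s v))
        (cart [:: La, Lb & LX ++ LY]) =
  ncol_theta La Lb LX LY.
Proof.
move=> l2_gt0 l3_gt0 sX sY; rewrite count_cart_cons; apply: eq_bigr => a _.
rewrite count_cart_cons; apply: eq_bigr => b _.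
rewrite -!ncol_path_count -count_cart_cat -count_andl; apply: eq_in_count => t.
rewrite mem_cart all2E size_cat => /andP[/eqP st _].
rewrite -{1}(cat_take_drop (size LX) t) (proper_theta a b (W := [::])) //=.
- by rewrite andbT.
- by rewrite size_takel // st leq_addr.
- by rewrite size_drop st addKn.
Qed.

Lemma eq_proper_col (T : finType) (e : rel T) (c1 c2 : T -> nat) :
  c1 =1 c2 -> proper_col e c1 = proper_col e c2.
Proof. by move=> eq_c; apply: eq_forallb => x; apply: eq_forallb => y; rewrite !eq_c. Qed.

Lemma P_list_cart N (e : rel 'I_N) m (L : 'I_N -> seq nat) : m_assignment m L ->
  P_list e m L =
  count (fun s => proper_col e (fun v => nth 0 s v)) (cart [seq L i | i <- enum 'I_N]).
Proof.
move=> mL; rewrite -(card_ffun_cart _ mL).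
apply: eq_card => f; rewrite !inE; apply: eq_proper_col => i.
by rewrite (nth_map i) ?size_enum_ord // nth_ord_enum.
Qed.

Lemma chrom_poly_P_list (T : finType) (e : rel T) m :
  chrom_poly e m = P_list e m (fun=> iota 0 m).
Proof.
apply: eq_card => f; rewrite !inE; apply: eq_proper_col => v.
by rewrite nth_iota.
Qed.

Lemma P_list_theta1 l2 l3 m L La Lb LX LY : 0 < l2 -> 0 < l3 -> m_assignment m L ->
  size LX = l2.-1 -> size LY = l3.-1 ->
  [seq L i | i <- enum 'I_(1 + l2 + l3 - 1)] = [:: La, Lb & LX ++ LY] ->
  P_list (theta_graph 1 l2 l3) m L = ncol_theta La Lb LX LY.
Proof.
by move=> l2_gt0 l3_gt0 mL sX sY eLs; rewrite P_list_cart // eLs count_proper_theta1.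
Qed.

Lemma chrom_poly_theta1 l2 l3 m : 0 < l2 -> 0 < l3 ->
  chrom_poly (theta_graph 1 l2 l3) m = m * (m - 1) * ucol_ne m l2.-1 * ucol_ne m l3.-1.
Proof.
move=> l2_gt0 l3_gt0; have mC : mlist m (iota 0 m) by rewrite /mlist iota_uniq size_iota eqxx.
rewrite chrom_poly_P_list -(ncol_theta_unif _ _ mC).
apply: P_list_theta1; rewrite ?size_nseq //; first by move=> v; rewrite size_iota iota_uniq.
have -> : [seq iota 0 m | _ <- enum 'I_(1 + l2 + l3 - 1)] =
          nseq (size (enum 'I_(1 + l2 + l3 - 1))) (iota 0 m) by elim: (enum _) => //= v s ->.
by rewrite -nseqD size_enum_ord (_ : 1 + l2 + l3 - 1 = (l2.-1 + l3.-1).+2) //; lia.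
Qed.

Lemma chrom_poly_le_P_list_theta1 l2 l3 m L : 0 < l2 -> ~~ odd l2 -> odd l3 -> 1 < l3 ->
  m_assignment m L -> chrom_poly (theta_graph 1 l2 l3) m <= P_list (theta_graph 1 l2 l3) m L.
Proof.
move=> l2_gt0 l2_even l3_odd l3_gt1 mL; have l3_gt0 := ltnW l3_gt1.
rewrite chrom_poly_theta1 //.
have sLs : size [seq L i | i <- enum 'I_(1 + l2 + l3 - 1)] = (l2.-1 + l3.-1).+2.
  by rewrite size_map size_enum_ord; lia.
have [La [Lb [LX [LY [eLs sX sY]]]]] := split_cons2_cat sLs.
rewrite (P_list_theta1 l2_gt0 l3_gt0 mL sX sY eLs) -sX -sY.
apply: ncol_theta_ge; rewrite ?sX ?sY -?eLs.
- by move: l2_even; rewrite -(prednK l2_gt0) /= negbK.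
- by move: l3_odd; rewrite -(prednK l3_gt0).
- have l3_ne2 : l3 != 2 by apply: contraTneq l3_odd => ->.
  lia.
by apply/allP => _ /mapP[v _ ->]; case: (mL v) => sLv uLv; rewrite /mlist uLv sLv eqxx.
Qed.

Theorem lemma2p8 (l2 l3 : nat) :
  0 < l2 -> ~~ odd l2 -> odd l3 -> 1 < l3 ->
  enum_chromatic_choosable (theta_graph 1 l2 l3).
Proof.
move=> l2_gt0 l2_even l3_odd l3_gt1 m; split; last first.
  by move=> L; apply: chrom_poly_le_P_list_theta1.
exists (fun=> iota 0 m); split; last by rewrite chrom_poly_P_list.
by move=> v; rewrite size_iota iota_uniq.
Qed.
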